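(* Let $D$ be a closed disk in the Euclidean plane whose boundary circle has circumference $8000$ (i.e. radius $4000/\pi$). Then there exist $8349$ closed rectangles, each of size $30\times 20$, all contained in $D$ and with pairwise disjoint interiors.
   Context: Rectangles may be placed at any position and with any orientation in the plane (they need not all be parallel to one another). *)

From Stdlib Require Import Reals.
Open Scope R_scope.

(* A placed 30 x 20 rectangle: centre (rcx, rcy), orientation angle rang.
   The closed rectangle is { c + s*(cos a, sin a) + t*(-sin a, cos a) : |s|<=15, |t|<=10 },
   described via the rotated coordinates of a point relative to the centre. *)
Record rect := mkRect { rcx : R; rcy : R; rang : R }.

Definition rcoord_u (r : rect) (x y : R) : R :=
  (x - rcx r) * cos (rang r) + (y - rcy r) * sin (rang r).
Definition rcoord_v (r : rect) (x y : R) : R :=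
  - (x - rcx r) * sin (rang r) + (y - rcy r) * cos (rang r).

Definition in_rect (r : rect) (x y : R) : Prop :=
  Rabs (rcoord_u r x y) <= 15 /\ Rabs (rcoord_v r x y) <= 10.

Definition in_rect_interior (r : rect) (x y : R) : Prop :=
  Rabs (rcoord_u r x y) < 15 /\ Rabs (rcoord_v r x y) < 10.

Definition in_disk (a b rho x y : R) : Prop :=
  (x - a) ^ 2 + (y - b) ^ 2 <= rho ^ 2.

From Stdlib Require Import Reals Lra Lia ZArith List.
Import ListNotations.
Open Scope R_scope.

(* The rectangles are packed in horizontal rows, stacked bottom to top, each row
   centred on a vertical diameter of the disk and consisting of rectangles of one
   orientation (lying 30 x 20 or upright 20 x 30), chosen row by row to fit as many
   as possible.  Rectangles in one row are separated horizontally, rectangles in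
   different rows vertically.  An axis-parallel rectangle lies in the disk as soon
   as its four corners do; with integer corners and the bound [PI <= 3.142] (so the
   radius is at least [4000/3.142]) this becomes a finite check on integers. *)

Lemma INR_fact_IZR (n : nat) (z : Z) : Z.of_nat (fact n) = z -> INR (fact n) = IZR z.
Proof. intros H; rewrite INR_IZR_INZ, H; reflexivity. Qed.

(* If [PI > 3.142] then [1.571 < PI/2], so [cos 1.571 > 0], but its Taylor upper
   bound of degree 8 is negative. *)
Lemma PI_le_3142 : PI <= 3142 / 1000.
Proof.
  destruct (Rle_lt_dec PI (3142 / 1000)) as [h | h]; [exact h | exfalso].
  assert (cos_pos : 0 < cos (1571 / 1000)) by (apply cos_gt_0; lra).
  destruct (pre_cos_bound (1571 / 1000) 1) as [_ cos_le]; try lra.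
  assert (cos_approx (1571 / 1000) (2 * (1 + 1)) < 0); [|lra].
  unfold cos_approx, cos_term; cbn [sum_f_R0 Nat.mul Nat.add].
  rewrite (INR_fact_IZR 0 1), (INR_fact_IZR 2 2), (INR_fact_IZR 4 24),
    (INR_fact_IZR 6 720), (INR_fact_IZR 8 40320) by (vm_compute; reflexivity).
  cbn [pow]; lra.
Qed.

Lemma radius_ge (rho : R) : 2 * PI * rho = 8000 -> 4000000 / 3142 <= rho.
Proof. intros H; pose proof PI_le_3142; pose proof PI_RGT_0; nra. Qed.

Lemma Rabs_le_between (r c : R) : Rabs r <= c -> - c <= r <= c.
Proof. unfold Rabs; destruct (Rcase_abs r); lra. Qed.

Lemma sq_le_endpoint (l t u : R) : l <= t <= u -> t * t <= l * l \/ t * t <= u * u.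
Proof. intros; destruct (Rle_dec 0 t); [right | left]; nra. Qed.

Lemma box_in_disk (x1 x2 y1 y2 r2 x y : R) :
  x1 <= x <= x2 -> y1 <= y <= y2 ->
  (forall X Y, (X = x1 \/ X = x2) -> (Y = y1 \/ Y = y2) -> X ^ 2 + Y ^ 2 <= r2) ->
  x ^ 2 + y ^ 2 <= r2.
Proof.
  intros Hx Hy corners.
  destruct (sq_le_endpoint _ _ _ Hx) as [hx | hx], (sq_le_endpoint _ _ _ Hy) as [hy | hy];
    [pose proof (corners x1 y1) | pose proof (corners x1 y2)
    | pose proof (corners x2 y1) | pose proof (corners x2 y2)]; simpl in *; nra.
Qed.

Lemma ForallOrdPairs_app {A : Type} (R : A -> A -> Prop) (l1 l2 : list A) :
  ForallOrdPairs R l1 -> ForallOrdPairs R l2 ->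
  (forall x y, In x l1 -> In y l2 -> R x y) -> ForallOrdPairs R (l1 ++ l2).
Proof.
  induction 1 as [| x l1 Hx _ IH]; intros H2 Hcross; [exact H2|].
  constructor.
  - apply Forall_app; split; [exact Hx|].
    apply Forall_forall; intros y Hy; apply Hcross; simpl; auto.
  - apply IH; [exact H2|]; intros; apply Hcross; simpl; auto.
Qed.

Lemma ForallOrdPairs_nth {A : Type} (R : A -> A -> Prop) (l : list A) (d : A) :
  (forall x y, R x y -> R y x) -> ForallOrdPairs R l ->
  forall i j, (i < length l)%nat -> (j < length l)%nat -> i <> j ->
  R (nth i l d) (nth j l d).
Proof.
  intros Rsym; induction 1 as [| x l Hx _ IH]; intros i j Hi Hj Hij; simpl in *; [lia|].
  rewrite Forall_forall in Hx.
  destruct i as [| i], j as [| j]; try lia.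
  - apply Hx, nth_In; lia.
  - apply Rsym, Hx, nth_In; lia.
  - apply IH; lia.
Qed.

Record slot := mkSlot { sx : Z; sy : Z; upright : bool }.

Definition half_width (v : bool) : Z := if v then 10 else 15.
Definition half_height (v : bool) : Z := if v then 15 else 10.

Definition rect_of_slot (a b : R) (s : slot) : rect :=
  mkRect (a + IZR (sx s)) (b + IZR (sy s)) (if upright s then PI / 2 else 0).

Lemma rcoords_of_slot (a b : R) (s : slot) (x y : R) :
  Rabs (rcoord_u (rect_of_slot a b s) x y) =
    (if upright s then Rabs (y - b - IZR (sy s)) else Rabs (x - a - IZR (sx s))) /\
  Rabs (rcoord_v (rect_of_slot a b s) x y) =
    (if upright s then Rabs (x - a - IZR (sx s)) else Rabs (y - b - IZR (sy s))).
Proof.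
  unfold rcoord_u, rcoord_v, rect_of_slot; cbn [rcx rcy rang].
  destruct (upright s); [rewrite cos_PI2, sin_PI2 | rewrite cos_0, sin_0]; split.
  - f_equal; ring.
  - rewrite <- Rabs_Ropp; f_equal; ring.
  - f_equal; ring.
  - f_equal; ring.
Qed.

Lemma in_rect_of_slot (a b : R) (s : slot) (x y : R) :
  in_rect (rect_of_slot a b s) x y <->
  Rabs (x - a - IZR (sx s)) <= IZR (half_width (upright s)) /\
  Rabs (y - b - IZR (sy s)) <= IZR (half_height (upright s)).
Proof.
  unfold in_rect; destruct (rcoords_of_slot a b s x y) as [-> ->].
  destruct (upright s); cbn [half_width half_height]; tauto.
Qed.

Lemma in_rect_interior_of_slot (a b : R) (s : slot) (x y : R) :
  in_rect_interior (rect_of_slot a b s) x y <->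
  Rabs (x - a - IZR (sx s)) < IZR (half_width (upright s)) /\
  Rabs (y - b - IZR (sy s)) < IZR (half_height (upright s)).
Proof.
  unfold in_rect_interior; destruct (rcoords_of_slot a b s x y) as [-> ->].
  destruct (upright s); cbn [half_width half_height]; tauto.
Qed.

Definition corner_in_disk (X Y : Z) : bool :=
  ((X * X + Y * Y) * (3142 * 3142) <=? 4000000 * 4000000)%Z.

Definition slot_in_disk (s : slot) : bool :=
  let w := half_width (upright s) in let h := half_height (upright s) in
  corner_in_disk (sx s - w) (sy s - h) && corner_in_disk (sx s - w) (sy s + h) &&
  corner_in_disk (sx s + w) (sy s - h) && corner_in_disk (sx s + w) (sy s + h).

Lemma corner_in_disk_spec (rho : R) (X Y : Z) :
  2 * PI * rho = 8000 -> corner_in_disk X Y = true -> IZR X ^ 2 + IZR Y ^ 2 <= rho ^ 2.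
Proof.
  intros Hrho HXY; apply Z.leb_le, IZR_le in HXY.
  rewrite !mult_IZR, plus_IZR, !mult_IZR in HXY.
  pose proof (radius_ge rho Hrho).
  assert (4000000 * 4000000 <= (rho * 3142) * (rho * 3142)) by nra.
  simpl; nra.
Qed.

Lemma rect_of_slot_in_disk (a b rho : R) (s : slot) (x y : R) :
  2 * PI * rho = 8000 -> slot_in_disk s = true ->
  in_rect (rect_of_slot a b s) x y -> in_disk a b rho x y.
Proof.
  intros Hrho Hs [Hx Hy]%in_rect_of_slot.
  apply Rabs_le_between in Hx, Hy.
  unfold slot_in_disk in Hs; rewrite !Bool.andb_true_iff in Hs.
  destruct Hs as [[[c1 c2] c3] c4].
  set (w := half_width (upright s)) in *; set (h := half_height (upright s)) in *.
  apply (box_in_disk (IZR (sx s - w)) (IZR (sx s + w)) (IZR (sy s - h)) (IZR (sy s + h))).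
  - rewrite minus_IZR, plus_IZR; lra.
  - rewrite minus_IZR, plus_IZR; lra.
  - intros X Y [-> | ->] [-> | ->]; apply corner_in_disk_spec; assumption.
Qed.

Definition slots_apart (s t : slot) : Prop :=
  let ws := half_width (upright s) in let wt := half_width (upright t) in
  let hs := half_height (upright s) in let ht := half_height (upright t) in
  (sx s + ws <= sx t - wt \/ sx t + wt <= sx s - ws \/
   sy s + hs <= sy t - ht \/ sy t + ht <= sy s - hs)%Z.

Lemma slots_apart_sym (s t : slot) : slots_apart s t -> slots_apart t s.
Proof. unfold slots_apart; lia. Qed.

Lemma slots_apart_interiors_disjoint (a b : R) (s t : slot) (x y : R) :
  slots_apart s t ->
  ~ (in_rect_interior (rect_of_slot a b s) x y /\ in_rect_interior (rect_of_slot a b t) x y).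
Proof.
  intros Hst [[Hsx Hsy]%in_rect_interior_of_slot [Htx Hty]%in_rect_interior_of_slot].
  apply Rabs_def2 in Hsx, Hsy, Htx, Hty.
  unfold slots_apart in Hst.
  destruct Hst as [H | [H | [H | H]]]; apply IZR_le in H;
    rewrite ?plus_IZR, ?minus_IZR in H; lra.
Qed.

Fixpoint row (x0 y0 : Z) (v : bool) (n : nat) : list slot :=
  match n with
  | O => []
  | S n =>
      mkSlot (x0 + half_width v) (y0 + half_height v) v :: row (x0 + 2 * half_width v) y0 v n
  end.

Lemma in_row (x0 y0 : Z) (v : bool) (n : nat) (s : slot) :
  In s (row x0 y0 v n) ->
  upright s = v /\ sy s = (y0 + half_height v)%Z /\ (x0 + half_width v <= sx s)%Z.
Proof.
  revert x0; induction n as [| n IH]; intros x0 Hs; simpl in Hs; [contradiction|].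
  destruct Hs as [<- | Hs]; [simpl; split; [reflexivity | lia]|].
  destruct (IH _ Hs) as (-> & -> & Hx); destruct v; simpl in *; lia.
Qed.

Lemma row_apart (x0 y0 : Z) (v : bool) (n : nat) :
  ForallOrdPairs slots_apart (row x0 y0 v n).
Proof.
  revert x0; induction n as [| n IH]; intros x0; constructor; [|apply IH].
  apply Forall_forall; intros t Ht.
  destruct (in_row _ _ _ _ _ Ht) as (Hv & _ & Hx).
  unfold slots_apart; simpl; rewrite Hv; lia.
Qed.

Fixpoint layout (y0 : Z) (rows : list (bool * nat)) : list slot :=
  match rows with
  | [] => []
  | (v, n) :: rows =>
      row (- (half_width v * Z.of_nat n)) y0 v n ++ layout (y0 + 2 * half_height v) rows
  end.

Lemma in_layout (y0 : Z) (rows : list (bool * nat)) (s : slot) :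
  In s (layout y0 rows) -> (y0 + half_height (upright s) <= sy s)%Z.
Proof.
  revert y0; induction rows as [| [v n] rows IH]; intros y0 Hs; simpl in Hs; [contradiction|].
  apply in_app_or in Hs as [Hs | Hs].
  - destruct (in_row _ _ _ _ _ Hs) as (-> & -> & _); lia.
  - specialize (IH _ Hs); destruct v, (upright s); simpl in *; lia.
Qed.

Lemma layout_apart (y0 : Z) (rows : list (bool * nat)) :
  ForallOrdPairs slots_apart (layout y0 rows).
Proof.
  revert y0; induction rows as [| [v n] rows IH]; intros y0; cbn [layout]; [constructor|].
  apply ForallOrdPairs_app; [apply row_apart | apply IH |].
  intros s t Hs Ht.
  destruct (in_row _ _ _ _ _ Hs) as (Hv & Hy & _); pose proof (in_layout _ _ _ Ht).
  unfold slots_apart; rewrite Hv, Hy; lia.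
Qed.

(* [true] marks a row of upright rectangles (20 wide, 30 high). *)
Definition disk_rows : list (bool * nat) := ([
  (false, 9); (false, 17); (false, 23); (false, 27); (false, 31);
  (false, 34); (false, 37); (false, 39); (false, 42); (false, 44);
  (false, 46); (false, 48); (false, 50); (false, 52); (false, 53);
  (false, 55); (true, 85); (false, 59); (false, 60); (true, 92);
  (true, 95); (false, 65); (false, 66); (false, 67); (false, 68);
  (false, 69); (false, 70); (true, 106); (true, 108); (true, 110);
  (true, 112); (true, 113); (true, 115); (false, 77); (false, 78);
  (true, 118); (false, 79); (true, 120); (true, 121); (false, 81);
  (true, 122); (true, 123); (true, 124); (false, 83); (true, 125);
  (true, 125); (false, 84); (true, 126); (true, 126); (true, 126);
  (true, 127); (true, 127); (true, 127); (true, 127); (true, 127);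
  (true, 126); (true, 126); (true, 126); (true, 125); (true, 125);
  (false, 83); (true, 124); (false, 82); (false, 82); (true, 122);
  (true, 121); (true, 120); (true, 119); (false, 79); (false, 78);
  (true, 116); (false, 77); (true, 114); (true, 112); (true, 110);
  (true, 109); (true, 107); (true, 105); (false, 69); (false, 68);
  (false, 67); (false, 66); (false, 65); (false, 64); (true, 93);
  (false, 61); (false, 59); (false, 58); (true, 84); (false, 54);
  (true, 78); (false, 50); (false, 48); (false, 46); (false, 44);
  (false, 42); (false, 39); (false, 37); (false, 34); (false, 31);
  (false, 27); (false, 23); (false, 17); (false, 9) ])%nat.

Definition disk_layout : list slot := layout (-1265) disk_rows.

Lemma disk_layout_in_disk : forallb slot_in_disk disk_layout = true.
Proof. vm_compute; reflexivity. Qed.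

Lemma disk_layout_length : (8349 <= length disk_layout)%nat.
Proof. apply Nat.leb_le; vm_compute; reflexivity. Qed.

Theorem mainTheorem3 :
  forall a b rho : R, 0 < rho -> 2 * PI * rho = 8000 ->
  exists rs : nat -> rect,
    (forall i, (i < 8349)%nat ->
       forall x y, in_rect (rs i) x y -> in_disk a b rho x y) /\
    (forall i j, (i < 8349)%nat -> (j < 8349)%nat -> i <> j ->
       forall x y, ~ (in_rect_interior (rs i) x y /\ in_rect_interior (rs j) x y)).
Proof.
  intros a b rho _ Hrho.
  pose proof disk_layout_length.
  exists (fun i => rect_of_slot a b (nth i disk_layout (mkSlot 0 0 false))).
  split.
  - intros i Hi x y; apply rect_of_slot_in_disk; [exact Hrho| ].
    apply (proj1 (forallb_forall _ _) disk_layout_in_disk), nth_In; lia.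
  - intros i j Hi Hj Hij x y; apply slots_apart_interiors_disjoint.
    apply ForallOrdPairs_nth; [exact slots_apart_sym | apply layout_apart | lia..].
Qed.
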